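(* Let $\mathcal{C}$ be a category, let $\otimes:\mathcal{C}\times\mathcal{C}\to\mathcal{C}$ be a functor, and let $\alpha$ be an associativity constraint for $\otimes$ (see context). Let $(P,\theta)$ be an idempotent in $\mathcal{C}$, i.e. $P\in\mathcal{C}$ and $\theta:P\otimes P\to P$ is an isomorphism. Let $C:P\to P$ be the unique automorphism making the diagram $$C\circ\theta\circ(\theta\otimes \mathrm{id}_P)=\theta\circ(\mathrm{id}_P\otimes\theta)\circ\alpha_{P,P,P}$$ hold as maps $(P\otimes P)\otimes P\to P$, i.e. $C=\theta\circ(\mathrm{id}_P\otimes\theta)\circ\alpha_{P,P,P}\circ(\theta\otimes\mathrm{id}_P)^{-1}\circ\theta^{-1}$. Suppose that $$\theta\circ(C\otimes\mathrm{id}_P)=C\circ\theta\quad\text{and}\quad \theta\circ(\mathrm{id}_P\otimes C)=C\circ\theta$$ as maps $P\otimes P\to P$. Then $C=\mathrm{id}_P$, i.e. $\theta$ is compatible with $\alpha$.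
   Context: An associativity constraint for a functor $\otimes:\mathcal{C}\times\mathcal{C}\to\mathcal{C}$ is a natural isomorphism $\alpha_{A,B,C}:(A\otimes B)\otimes C\to A\otimes(B\otimes C)$ (natural in $A,B,C\in\mathcal{C}$) satisfying the pentagon axiom: for all $A,B,C,D$, $(\mathrm{id}_A\otimes\alpha_{B,C,D})\circ\alpha_{A,B\otimes C,D}\circ(\alpha_{A,B,C}\otimes\mathrm{id}_D)=\alpha_{A,B,C\otimes D}\circ\alpha_{A\otimes B,C,D}$ as maps $((A\otimes B)\otimes C)\otimes D\to A\otimes(B\otimes(C\otimes D))$. No unit object or other monoidal structure is assumed. An idempotent structure $\theta$ on $P$ is called compatible with $\alpha$ if the automorphism $C$ defined in the claim is the identity. *)

Set Implicit Arguments.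
Unset Strict Implicit.

Record Category := {
  Ob :> Type;
  Hom : Ob -> Ob -> Type;
  idm : forall A, Hom A A;
  comp : forall A B C, Hom B C -> Hom A B -> Hom A C;
  comp_id_l : forall A B (f : Hom A B), comp (idm B) f = f;
  comp_id_r : forall A B (f : Hom A B), comp f (idm A) = f;
  comp_assoc : forall A B C D (h : Hom C D) (g : Hom B C) (f : Hom A B),
      comp h (comp g f) = comp (comp h g) f
}.

Arguments Hom {c} _ _.
Arguments idm {c} _.
Arguments comp {c A B C} _ _.

Notation "g \oc f" := (comp g f) (at level 40, left associativity).

Definition is_iso (C : Category) (A B : C) (f : Hom A B) : Prop :=
  exists g : Hom B A, g \oc f = idm A /\ f \oc g = idm B.

Record Bifunctor (C : Category) := {
  tob :> C -> C -> C;
  thom : forall A A' B B', Hom A A' -> Hom B B' -> Hom (tob A B) (tob A' B');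
  thom_id : forall A B, thom (idm A) (idm B) = idm (tob A B);
  thom_comp : forall A A' A'' B B' B''
      (f' : Hom A' A'') (f : Hom A A') (g' : Hom B' B'') (g : Hom B B'),
      thom (f' \oc f) (g' \oc g) = thom f' g' \oc thom f g
}.

Arguments thom {C} b {A A' B B'} _ _.

Record AssocConstraint (C : Category) (T : Bifunctor C) := {
  assoc : forall A B D : C, Hom (T (T A B) D) (T A (T B D));
  assoc_iso : forall A B D, is_iso (assoc A B D);
  assoc_nat : forall A A' B B' D D' (f : Hom A A') (g : Hom B B') (h : Hom D D'),
      assoc A' B' D' \oc thom T (thom T f g) h
      = thom T f (thom T g h) \oc assoc A B D;
  assoc_pentagon : forall A B D E : C,
      thom T (idm A) (assoc B D E) \oc assoc A (T B D) E
        \oc thom T (assoc A B D) (idm E)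
      = assoc A B (T D E) \oc assoc (T A B) D E
}.

Arguments assoc {C T} _ A B D.


Set Implicit Arguments.
Unset Strict Implicit.

(* Write an n-fold product of copies of P for any way of
   bracketing P (x) ... (x) P, and "evaluate" it to P by applying theta at
   every node.  The defining equation of C says that the associator
   alpha_{P,P,P}, read through these evaluations, acts as C.  Using the
   naturality of alpha (for the three edges of the pentagon that move a
   whole factor P (x) P) and the hypotheses theta o (C (x) id) = C o theta,
   theta o (id (x) C) = C o theta (for the two edges that are whiskered
   associators), every edge of the pentagon for P, P, P, P turns the
   evaluation of its source into C composed with the evaluation of its
   target.  The pentagon's two paths have lengths 3 and 2, so
   C^3 o e = C^2 o e for the evaluation e of ((PP)P)P.  Since e and C are
   isomorphisms, C = id. *)

Section CategoryFacts.
Variable Cat : Category.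

Lemma is_iso_idm (A : Cat) : is_iso (idm A).
Proof. exists (idm A); split; apply comp_id_l. Qed.

Lemma is_iso_comp (A B D : Cat) (f : Hom B D) (g : Hom A B) :
  is_iso f -> is_iso g -> is_iso (f \oc g).
Proof.
  intros [f' [Hf1 Hf2]] [g' [Hg1 Hg2]]. exists (g' \oc f'). split.
  - rewrite <- comp_assoc, (comp_assoc f' f g), Hf1, comp_id_l; exact Hg1.
  - rewrite <- comp_assoc, (comp_assoc g g' f'), Hg2, comp_id_l; exact Hf2.
Qed.

Lemma is_iso_of_comp (A B D : Cat) (c : Hom B D) (u : Hom A B) :
  is_iso u -> is_iso (c \oc u) -> is_iso c.
Proof.
  intros [u' [Hu1 Hu2]] [v' [Hv1 Hv2]]. exists (u \oc v'). split.
  - rewrite <- (comp_id_r (u \oc v' \oc c)), <- Hu2, comp_assoc.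
    rewrite <- (comp_assoc (u \oc v') c u), <- (comp_assoc u v' (c \oc u)), Hv1.
    rewrite comp_id_r; reflexivity.
  - rewrite comp_assoc; exact Hv2.
Qed.

Lemma iso_cancel_l (A B D : Cat) (m : Hom B D) (f g : Hom A B) :
  is_iso m -> m \oc f = m \oc g -> f = g.
Proof.
  intros [m' [H1 H2]] E.
  rewrite <- (comp_id_l f), <- (comp_id_l g), <- H1, <- !comp_assoc, E.
  reflexivity.
Qed.

Lemma iso_cancel_r (A B D : Cat) (m : Hom A B) (f g : Hom B D) :
  is_iso m -> f \oc m = g \oc m -> f = g.
Proof.
  intros [m' [H1 H2]] E.
  rewrite <- (comp_id_r f), <- (comp_id_r g), <- H2, !comp_assoc, E.
  reflexivity.
Qed.

Lemma paste_twisted_squares (A B D O : Cat) (c : Hom O O)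
    (e : Hom A O) (e' : Hom B O) (e'' : Hom D O) (a : Hom A B) (b : Hom B D) :
  e' \oc a = c \oc e -> e'' \oc b = c \oc e' -> e'' \oc (b \oc a) = c \oc (c \oc e).
Proof. intros Ha Hb. rewrite comp_assoc, Hb, <- comp_assoc, Ha. reflexivity. Qed.

Variable T : Bifunctor Cat.

Lemma is_iso_thom (A A' B B' : Cat) (f : Hom A A') (g : Hom B B') :
  is_iso f -> is_iso g -> is_iso (thom T f g).
Proof.
  intros [f' [Hf1 Hf2]] [g' [Hg1 Hg2]]. exists (thom T f' g'). split.
  - rewrite <- thom_comp, Hf1, Hg1, thom_id; reflexivity.
  - rewrite <- thom_comp, Hf2, Hg2, thom_id; reflexivity.
Qed.

Lemma thom_comp_l (A A' A'' B : Cat) (f : Hom A' A'') (g : Hom A A') :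
  thom T (f \oc g) (idm B) = thom T f (idm B) \oc thom T g (idm B).
Proof. rewrite <- thom_comp, comp_id_l; reflexivity. Qed.

Lemma thom_comp_r (A B B' B'' : Cat) (f : Hom B' B'') (g : Hom B B') :
  thom T (idm A) (f \oc g) = thom T (idm A) f \oc thom T (idm A) g.
Proof. rewrite <- thom_comp, comp_id_l; reflexivity. Qed.

Lemma thom_post_l (A A' A'' B B' : Cat) (k : Hom A' A'') (f : Hom A A') (g : Hom B B') :
  thom T (k \oc f) g = thom T k (idm B') \oc thom T f g.
Proof. rewrite <- thom_comp, comp_id_l; reflexivity. Qed.

Lemma thom_post_r (A A' B B' B'' : Cat) (k : Hom B' B'') (f : Hom A A') (g : Hom B B') :
  thom T f (k \oc g) = thom T (idm A') k \oc thom T f g.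
Proof. rewrite <- thom_comp, comp_id_l; reflexivity. Qed.

End CategoryFacts.

Section TwistedIdempotent.
Variables (Cat : Category) (T : Bifunctor Cat) (alpha : AssocConstraint T).
Variables (P : Cat) (theta : Hom (T P P) P) (C : Hom P P).

Hypothesis HC : C \oc theta \oc thom T theta (idm P)
                = theta \oc thom T (idm P) theta \oc assoc alpha P P P.

Definition eval_lll : Hom (T (T (T P P) P) P) P :=
  theta \oc thom T (theta \oc thom T theta (idm P)) (idm P).
Definition eval_lrl : Hom (T (T P (T P P)) P) P :=
  theta \oc thom T (theta \oc thom T (idm P) theta) (idm P).
Definition eval_rll : Hom (T P (T (T P P) P)) P :=
  theta \oc thom T (idm P) (theta \oc thom T theta (idm P)).
Definition eval_rrr : Hom (T P (T P (T P P))) P :=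
  theta \oc thom T (idm P) (theta \oc thom T (idm P) theta).
Definition eval_ll_rr : Hom (T (T P P) (T P P)) P :=
  theta \oc thom T theta theta.

(* Naturality of alpha propagates the defining equation of C to arbitrary
   factors: evaluating x(yz) after alpha is C applied to evaluating (xy)z. *)
Lemma twisted_assoc (X Y Z : Cat) (f : Hom X P) (g : Hom Y P) (h : Hom Z P) :
  theta \oc thom T f (theta \oc thom T g h) \oc assoc alpha X Y Z
  = C \oc (theta \oc thom T (theta \oc thom T f g) h).
Proof.
  rewrite thom_post_r, comp_assoc, <- (comp_assoc _ _ (assoc alpha X Y Z)).
  rewrite <- assoc_nat, comp_assoc, <- HC.
  rewrite thom_post_l, <- !comp_assoc. reflexivity.
Qed.

Lemma twisted_whisker_l (X Y : Cat) (u : Hom X P) (v : Hom Y P) (a : Hom X Y) :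
  theta \oc thom T C (idm P) = C \oc theta ->
  C \oc u = v \oc a ->
  theta \oc thom T v (idm P) \oc thom T a (idm P) = C \oc (theta \oc thom T u (idm P)).
Proof.
  intros HCl Hua.
  rewrite <- comp_assoc, <- thom_comp_l, <- Hua, thom_comp_l, comp_assoc, HCl.
  rewrite <- comp_assoc. reflexivity.
Qed.

Lemma twisted_whisker_r (X Y : Cat) (u : Hom X P) (v : Hom Y P) (a : Hom X Y) :
  theta \oc thom T (idm P) C = C \oc theta ->
  C \oc u = v \oc a ->
  theta \oc thom T (idm P) v \oc thom T (idm P) a = C \oc (theta \oc thom T (idm P) u).
Proof.
  intros HCr Hua.
  rewrite <- comp_assoc, <- thom_comp_r, <- Hua, thom_comp_r, comp_assoc, HCr.
  rewrite <- comp_assoc. reflexivity.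
Qed.

(* The defining equation of C in the two-composite form used for whiskering. *)
Lemma twist_eq :
  C \oc (theta \oc thom T theta (idm P))
  = theta \oc thom T (idm P) theta \oc assoc alpha P P P.
Proof. rewrite comp_assoc; exact HC. Qed.

Hypothesis HCl : theta \oc thom T C (idm P) = C \oc theta.
Hypothesis HCr : theta \oc thom T (idm P) C = C \oc theta.

Lemma edge_alpha_id : eval_lrl \oc thom T (assoc alpha P P P) (idm P) = C \oc eval_lll.
Proof. exact (twisted_whisker_l HCl twist_eq). Qed.

Lemma edge_alpha_middle : eval_rll \oc assoc alpha P (T P P) P = C \oc eval_lrl.
Proof. exact (twisted_assoc (idm P) theta (idm P)). Qed.

Lemma edge_id_alpha : eval_rrr \oc thom T (idm P) (assoc alpha P P P) = C \oc eval_rll.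
Proof. exact (twisted_whisker_r HCr twist_eq). Qed.

Lemma edge_alpha_first : eval_ll_rr \oc assoc alpha (T P P) P P = C \oc eval_lll.
Proof.
  pose proof (twisted_assoc theta (idm P) (idm P)) as E.
  rewrite thom_id, comp_id_r in E. exact E.
Qed.

Lemma edge_alpha_last : eval_rrr \oc assoc alpha P P (T P P) = C \oc eval_ll_rr.
Proof.
  pose proof (twisted_assoc (idm P) (idm P) theta) as E.
  rewrite thom_id, comp_id_r in E. exact E.
Qed.

Lemma pentagon_twist : C \oc (C \oc (C \oc eval_lll)) = C \oc (C \oc eval_lll).
Proof.
  pose proof (paste_twisted_squares edge_alpha_id edge_alpha_middle) as three_path.
  pose proof (paste_twisted_squares three_path edge_id_alpha) as long_path.
  pose proof (paste_twisted_squares edge_alpha_first edge_alpha_last) as short_path.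
  rewrite <- long_path, <- short_path, <- assoc_pentagon.
  rewrite <- (comp_assoc (thom T (idm P) (assoc alpha P P P))). reflexivity.
Qed.

Hypothesis Htheta : is_iso theta.

(* C = (theta o (id (x) theta) o alpha) o (theta o (theta (x) id))^-1. *)
Lemma twist_is_iso : is_iso C.
Proof.
  apply (is_iso_of_comp (u := theta \oc thom T theta (idm P))).
  - exact (is_iso_comp Htheta (is_iso_thom T Htheta (is_iso_idm P))).
  - rewrite twist_eq.
    apply is_iso_comp; [| apply assoc_iso].
    exact (is_iso_comp Htheta (is_iso_thom T (is_iso_idm P) Htheta)).
Qed.

Lemma eval_lll_is_iso : is_iso eval_lll.
Proof.
  apply (is_iso_comp Htheta), is_iso_thom; [| apply is_iso_idm].
  exact (is_iso_comp Htheta (is_iso_thom T Htheta (is_iso_idm P))).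
Qed.

End TwistedIdempotent.

Theorem mainTheorem1 (Cat : Category) (T : Bifunctor Cat)
    (alpha : AssocConstraint T) (P : Cat) (theta : Hom (T P P) P)
    (Htheta : is_iso theta) (C : Hom P P)
    (HC : C \oc theta \oc thom T theta (idm P)
          = theta \oc thom T (idm P) theta \oc assoc alpha P P P)
    (H1 : theta \oc thom T C (idm P) = C \oc theta)
    (H2 : theta \oc thom T (idm P) C = C \oc theta) :
  C = idm P.
Proof.
  pose proof (pentagon_twist HC H1 H2) as C3_eq_C2.
  pose proof (twist_is_iso HC Htheta) as C_iso.
  apply (iso_cancel_l C_iso), (iso_cancel_l C_iso) in C3_eq_C2.
  apply (iso_cancel_r (eval_lll_is_iso Htheta)).
  rewrite comp_id_l. exact C3_eq_C2.
Qed.
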